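(* Let $X$ be one of $\mathbb{R}^d$, $\mathbb{S}^d$, or $\mathbb{H}^d$ with its standard metric, let $G$ be a discontinuous group of isometries of $X$, and let $x_0\in X$ have trivial stabilizer in $G$. Let $S=G x_0$ be the orbit of $x_0$. Then for every positive integer $n\le\#(S)$, the $n$-th Brillouin zone $B_n(x_0)$ (with respect to $S$) is a fundamental domain for the action of $G$ on $X$. Its boundary is a union of pieces of totally geodesic subspaces and equals the boundary of its interior.
   Context: For a metric space $(X,d)$, a discrete set $S$ and $x_0\in S$: $N_r(x)=\{y: d(x,y)<r\}$, $C_r(x)=\{y: d(x,y)=r\}$, $\#$ is cardinality; for $1\le n\le\#(S)$ and $x\in X$ with $r=d(x,x_0)$, $x\in B_n(x_0)$ iff $\#(N_r(x)\cap S)=m$ and $\#(C_r(x)\cap S)=\ell$ for some integers $m\ge0$, $\ell\ge1$ with $m+1\le n\le m+\ell$. *)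

From mathcomp Require Import all_boot all_order all_algebra.
From mathcomp Require Import all_classical all_reals all_analysis.
Set Implicit Arguments. Unset Strict Implicit. Unset Printing Implicit Defensive.
Import Order.TTheory GRing.Theory Num.Theory.
Local Open Scope classical_set_scope.
Local Open Scope ring_scope.
Local Open Scope card_scope.

(* The three model geometries: Euclidean space R^d, the sphere S^d, and
   hyperbolic space H^d (hyperboloid model). *)
Inductive geom := Euclid | Sphere | Hyperbolic.

Section Geometry.
Variable R : realType.

(* ambient dimension: R^d sits in R^d, S^d and H^d sit in R^(d+1) *)
Definition dim (k : geom) (d : nat) : nat :=
  if k is Euclid then d else d.+1.

Definition dotv n (u v : 'rV[R]_n) : R := \sum_(i < n) u 0 i * v 0 i.

Definition lorentz n (u v : 'rV[R]_n.+1) : R :=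
  - (u 0 ord0 * v 0 ord0) + \sum_(i < n.+1 | i != ord0) u 0 i * v 0 i.

Definition hacosh (t : R) : R := ln (t + Num.sqrt (t ^+ 2 - 1)).

Definition inspace (k : geom) (d : nat) : 'rV[R]_(dim k d) -> Prop :=
  match k as k0 return 'rV[R]_(dim k0 d) -> Prop with
  | Euclid => fun _ => True
  | Sphere => fun x => dotv x x = 1
  | Hyperbolic => fun x => lorentz x x = -1 /\ 0 < x 0 ord0
  end.

Definition ambient_dist (k : geom) (d : nat) :
    'rV[R]_(dim k d) -> 'rV[R]_(dim k d) -> R :=
  match k as k0 return 'rV[R]_(dim k0 d) -> 'rV[R]_(dim k0 d) -> R with
  | Euclid => fun x y => Num.sqrt (dotv (x - y) (x - y))
  | Sphere => fun x y => acos (dotv x y)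
  | Hyperbolic => fun x y => hacosh (- lorentz x y)
  end.

(* totally geodesic hypersurfaces (hyperplanes) of each model, as ambient sets:
   affine hyperplanes of R^d; great spheres S^d ∩ a^⊥ (a <> 0);
   hyperbolic hyperplanes H^d ∩ a^⊥_L with a space-like (a Lorentz-normal of
   a time-like linear model_hyperplane of R^(1,d)) *)
Definition ambient_hyperplane (k : geom) (d : nat) :
    set 'rV[R]_(dim k d) -> Prop :=
  match k as k0 return set 'rV[R]_(dim k0 d) -> Prop with
  | Euclid => fun H => exists (a : 'rV[R]_d) (b : R),
      a != 0 /\ H = [set x | dotv a x = b]
  | Sphere => fun H => exists (a : 'rV[R]_d.+1),
      a != 0 /\ H = [set x | dotv a x = 0]
  | Hyperbolic => fun H => exists (a : 'rV[R]_d.+1),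
      0 < lorentz a a /\ H = [set x | lorentz a x = 0]
  end.

Definition mpoint (k : geom) (d : nat) := {x : 'rV[R]_(dim k d) | inspace x}.

Definition geo_dist (k : geom) (d : nat) (x y : mpoint k d) : R :=
  ambient_dist (proj1_sig x) (proj1_sig y).

Definition model_hyperplane (k : geom) (d : nat) (H : set (mpoint k d)) : Prop :=
  exists A : set 'rV[R]_(dim k d), ambient_hyperplane A /\
    H = [set x | A (proj1_sig x)].

End Geometry.

Section MetricNotions.
Variables (R : realType) (T : Type) (dst : T -> T -> R).

Definition oball (x : T) (r : R) : set T := [set y | dst x y < r].
Definition sphere_at (x : T) (r : R) : set T := [set y | dst x y = r].

Definition minterior (A : set T) : set T :=
  [set x | exists2 e : R, 0 < e & oball x e `<=` A].
Definition mclosure (A : set T) : set T :=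
  [set x | forall e : R, 0 < e -> exists2 y, A y & dst x y < e].
Definition mclosed (A : set T) : Prop := mclosure A `<=` A.
Definition mboundary (A : set T) : set T := mclosure A `\` minterior A.

Definition brillouin (S : set T) (n : nat) (x0 : T) : set T :=
  [set x | exists m l : nat, (1 <= l)%N /\
     (oball x (dst x x0) `&` S) #= `I_m /\
     (sphere_at x (dst x x0) `&` S) #= `I_l /\
     (m + 1 <= n)%N /\ (n <= m + l)%N].

Definition misometry (g : T -> T) : Prop :=
  bijective g /\ forall x y, dst (g x) (g y) = dst x y.

Definition isometry_group (G : set (T -> T)) : Prop :=
  [/\ G id, (forall g h, G g -> G h -> G (g \o h)),
      (forall g, G g -> exists2 h, G h & (h \o g = id /\ g \o h = id))
    & (forall g, G g -> misometry g)].

(* discontinuous_group action: for every (closed) ball B only finitely many g in G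
   satisfy g B ∩ B <> ∅ (closed balls are compact in the model spaces and
   every compact set lies in such a ball) *)
Definition discontinuous_group (G : set (T -> T)) : Prop :=
  forall (x : T) (r : R), 0 < r ->
    finite_set [set g | G g /\ exists y, dst x y <= r /\ dst x (g y) <= r].

Definition gorbit (G : set (T -> T)) (x0 : T) : set T := (fun g => g x0) @` G.

Definition trivial_stabilizer (G : set (T -> T)) (x0 : T) : Prop :=
  forall g, G g -> g x0 = x0 -> g = id.

Definition fundamental_domain (G : set (T -> T)) (F : set T) : Prop :=
  [/\ mclosed F,
      (forall x, exists2 g, G g & (g @` F) x)
    & (forall g h, G g -> G h -> g <> h ->
         (g @` minterior F) `&` (h @` minterior F) = set0)].

Definition locally_finite (F : set (set T)) : Prop :=
  forall x, exists2 e : R, 0 < e &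
    finite_set [set H | F H /\ exists2 y, H y & dst x y < e].

End MetricNotions.

(* x lies in B_n(x0) iff x0 can be listed n-th when the orbit S = G x0 is ordered by
   distance to x.  Since G permutes S isometrically, x lies in g B_n(x0) as soon as
   g x0 is an n-th nearest orbit point of x, so the translates of B_n(x0) cover X.
   Orbit points that are not equidistant from x with x0 stay on their side of x0
   near x; hence B_n(x0) is closed, it is a neighbourhood of each of its points
   without such a tie, and its boundary lies in the locally finite family of the
   bisectors of x0 and the other orbit points, which are totally geodesic.
   Finally, ties can be broken at will: in ambient coordinates, a small move of x
   reorders two equidistant points t, p according to the sign of a linear form at
   p - t, and the points tied with p lie on a quadric through p, so a suitable form
   puts any prescribed number of them before p.  Breaking the tie between g x0 and
   h x0 shows that distinct translates have disjoint interiors, and breaking the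
   ties at a point of B_n(x0) so that x0 comes exactly n-th shows that B_n(x0) is
   the closure of its interior, whence the equality of the two boundaries. *)

From HB Require Import structures.
From mathcomp Require Import all_boot all_order all_algebra finmap.
From mathcomp Require Import all_classical all_reals all_analysis.
From mathcomp Require Import ring lra zify.
Set Implicit Arguments. Unset Strict Implicit. Unset Printing Implicit Defensive.
Import Order.TTheory GRing.Theory Num.Theory.
Local Open Scope classical_set_scope.
Local Open Scope ring_scope.
Local Open Scope card_scope.
Section Dotv.
Variable R : realType.

Lemma dotvC n (u v : 'rV[R]_n) : dotv u v = dotv v u.
Proof. by apply: eq_bigr => i _; rewrite mulrC. Qed.

Lemma dotvDl n (u v w : 'rV[R]_n) : dotv (u + v) w = dotv u w + dotv v w.
Proof. by rewrite /dotv -big_split; apply: eq_bigr => i _; rewrite mxE mulrDl. Qed.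

Lemma dotvZl n a (u v : 'rV[R]_n) : dotv (a *: u) v = a * dotv u v.
Proof. by rewrite /dotv mulr_sumr; apply: eq_bigr => i _; rewrite mxE mulrA. Qed.

Lemma dotvNl n (u v : 'rV[R]_n) : dotv (- u) v = - dotv u v.
Proof. by rewrite -scaleN1r dotvZl mulN1r. Qed.

Lemma dotvBl n (u v w : 'rV[R]_n) : dotv (u - v) w = dotv u w - dotv v w.
Proof. by rewrite dotvDl dotvNl. Qed.

Lemma dotvDr n (u v w : 'rV[R]_n) : dotv w (u + v) = dotv w u + dotv w v.
Proof. by rewrite dotvC dotvDl !(dotvC w). Qed.

Lemma dotvZr n a (u v : 'rV[R]_n) : dotv v (a *: u) = a * dotv v u.
Proof. by rewrite dotvC dotvZl dotvC. Qed.

Lemma dotvNr n (u v : 'rV[R]_n) : dotv v (- u) = - dotv v u.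
Proof. by rewrite dotvC dotvNl dotvC. Qed.

Lemma dotvBr n (u v w : 'rV[R]_n) : dotv w (u - v) = dotv w u - dotv w v.
Proof. by rewrite dotvDr dotvNr. Qed.

Lemma dotvvN n (u : 'rV[R]_n) : dotv (- u) (- u) = dotv u u.
Proof. by rewrite dotvNl dotvNr opprK. Qed.

Lemma dotv0l n (v : 'rV[R]_n) : dotv 0 v = 0.
Proof. by rewrite -(scale0r 0) dotvZl mul0r. Qed.

Lemma dotvv_ge0 n (u : 'rV[R]_n) : 0 <= dotv u u.
Proof. by apply: sumr_ge0 => i _; rewrite -expr2 sqr_ge0. Qed.

Lemma dotvv_eq0 n (u : 'rV[R]_n) : (dotv u u == 0) = (u == 0).
Proof.
apply/eqP/eqP => [uu0|->]; last exact: dotv0l.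
apply/rowP => i; rewrite mxE; apply/eqP; rewrite -sqrf_eq0 expr2; apply/eqP.
by move: uu0 => /psumr_eq0P-> // j _; rewrite -expr2 sqr_ge0.
Qed.

Lemma dotvv_gt0 n (u : 'rV[R]_n) : (0 < dotv u u) = (u != 0).
Proof. by rewrite lt_neqAle dotvv_ge0 andbT eq_sym dotvv_eq0. Qed.

Lemma quadratic_ge0_disc (A B C : R) : 0 <= C ->
  (forall t, 0 <= A + 2 * B * t + C * t ^+ 2) -> B ^+ 2 <= A * C.
Proof.
move=> C_ge0 ge0; have [C0|C_neq0] := eqVneq C 0.
  subst C; have [->|B_neq0] := eqVneq B 0; first by rewrite expr0n mulr0.
  have := ge0 (- (A + 1) / (2 * B)).
  have -> : A + 2 * B * (- (A + 1) / (2 * B)) + 0 * (- (A + 1) / (2 * B)) ^+ 2 = -1.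
    by field.
  by rewrite ler0N1.
have C_gt0 : 0 < C by rewrite lt_neqAle eq_sym C_neq0.
have := ge0 (- B / C).
have -> : A + 2 * B * (- B / C) + C * (- B / C) ^+ 2 = (A * C - B ^+ 2) / C by field.
by rewrite pmulr_lge0 ?invr_gt0 // subr_ge0.
Qed.

Lemma cauchy_schwarz n (u v : 'rV[R]_n) : dotv u v ^+ 2 <= dotv u u * dotv v v.
Proof.
apply: quadratic_ge0_disc (dotvv_ge0 v) _ => t.
have := dotvv_ge0 (u + t *: v).
rewrite dotvDl !dotvDr !dotvZl !dotvZr (dotvC v u) => /le_trans; apply.
by rewrite le_eqVlt; apply/orP; left; apply/eqP; ring.
Qed.

Lemma norm_dotv_le n (u v : 'rV[R]_n) :
  `|dotv u v| <= Num.sqrt (dotv u u) * Num.sqrt (dotv v v).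
Proof.
rewrite -sqrtrM ?dotvv_ge0 // -sqrtr_sqr ler_sqrt ?cauchy_schwarz //.
by rewrite mulr_ge0 ?dotvv_ge0.
Qed.

Lemma exists_gt_seq (s : seq R) : exists x, forall y, y \in s -> y < x.
Proof.
elim: s => [|a s [x gtx]]; first by exists 0.
exists (Num.max a x + 1) => y; rewrite inE => y_in.
have : y <= Num.max a x.
  by case/orP: y_in => [/eqP->|/gtx/ltW yx]; rewrite le_max ?lexx ?yx ?orbT.
by move/le_lt_trans; apply; rewrite ltrDl.
Qed.

Lemma exists_notin_seq (s : seq R) : exists x, x \notin s.
Proof.
have [x gtx] := exists_gt_seq s; exists x.
by apply/negP => /gtx; rewrite ltxx.
Qed.

Lemma exists_nonorthogonal n (cs : seq 'rV[R]_n) :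
  (forall c, c \in cs -> c != 0) -> exists w, forall c, c \in cs -> dotv w c != 0.
Proof.
elim: cs => [|c cs IHcs] cs_neq0; first by exists 0.
have [w w_cs] : exists w, forall c', c' \in cs -> dotv w c' != 0.
  by apply: IHcs => c' c'_in; apply: cs_neq0; rewrite inE c'_in orbT.
have c_neq0 : c != 0 by apply: cs_neq0; rewrite mem_head.
(* each c' excludes at most one value of lam for the candidate w + lam c *)
have [lam lam_ok] := exists_notin_seq [seq - dotv w c' / dotv c c' | c' <- c :: cs].
exists (w + lam *: c) => c' c'_in; rewrite dotvDl dotvZl.
have [cc'0|cc'_neq0] := eqVneq (dotv c c') 0.
  rewrite cc'0 mulr0 addr0; apply: w_cs.
  move: c'_in; rewrite inE => /orP[/eqP c'c|//].
  by move: cc'0; rewrite c'c => /eqP; rewrite dotvv_eq0 (negbTE c_neq0).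
apply: contraNneq lam_ok => sum0; apply/mapP; exists c' => //.
have -> : dotv w c' = - (lam * dotv c c') by apply/eqP; rewrite -addr_eq0 sum0.
by rewrite opprK mulfK.
Qed.

End Dotv.

Section FiniteSets.
Variable T : choiceType.
Implicit Types A B : set T.

Lemma seq_argmin (R : realType) (f : T -> R) (s : seq T) : s != [::] ->
  exists2 a, a \in s & forall b, b \in s -> f a <= f b.
Proof.
elim: s => [//|a s IHs] _; have [->|s_neq0] := eqVneq s [::].
  by exists a; rewrite ?mem_head // => b; rewrite inE => /eqP->.
have [c c_in c_min] := IHs s_neq0.
have [ac|ca] := leP (f a) (f c).
  exists a; first exact: mem_head.
  by move=> b; rewrite inE => /orP[/eqP->//|/c_min]; apply: le_trans.
exists c; first by rewrite inE c_in orbT.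
by move=> b; rewrite inE => /orP[/eqP->|/c_min//]; exact: ltW.
Qed.

Lemma finite_argmin (R : realType) (f : T -> R) A : finite_set A -> A !=set0 ->
  exists2 a, A a & forall b, A b -> f a <= f b.
Proof.
move=> /finite_fsetP[X ->] [y Xy].
have /(seq_argmin f)[a aX a_min] : (X : seq T) != [::].
  by apply: contraTneq Xy => /= X0; rewrite -[y \in X]/(y \in (X : seq T)) X0.
by exists a => // b; exact: a_min.
Qed.

Lemma finite_argmax (R : realType) (f : T -> R) A : finite_set A -> A !=set0 ->
  exists2 a, A a & forall b, A b -> f b <= f a.
Proof.
move=> finA A0; have [a Aa a_min] := finite_argmin (fun x => - f x) finA A0.
by exists a => // b /a_min; rewrite lerN2.
Qed.

Lemma finite_gt0_lb (R : realType) (f : T -> R) A : finite_set A ->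
  (forall a, A a -> 0 < f a) -> exists2 e, 0 < e & forall a, A a -> e < f a.
Proof.
move=> finA f_gt0; have [->|/set0P A0] := eqVneq A set0; first by exists 1.
have [a Aa a_min] := finite_argmin f finA A0.
have fa_gt0 := f_gt0 a Aa.
exists (f a / 2) => [|b /a_min]; first by rewrite divr_gt0.
by apply: lt_le_trans; rewrite ltr_pdivrMr // ltr_pMr // ltr1n.
Qed.

Lemma card_eq_fset_set A : finite_set A -> A #= `I_#|` fset_set A|.
Proof. by move=> finA; rewrite -[X in X #= _](fset_setK finA); exact/card_eq_fsetP. Qed.

Lemma card_fset_set_le A B : finite_set B -> A `<=` B ->
  (#|` fset_set A| <= #|` fset_set B|)%N.
Proof.
move=> finB AB; apply: fsubset_leq_card.
by rewrite -fset_set_sub //; exact: sub_finite_set finB.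
Qed.

Lemma card_fset_setU A B : finite_set A -> finite_set B -> A `&` B = set0 ->
  #|` fset_set (A `|` B)| = (#|` fset_set A| + #|` fset_set B|)%N.
Proof.
move=> finA finB AB0; rewrite fset_setU // cardfsU -fset_setI // AB0.
by rewrite fset_set0 cardfs0 subn0.
Qed.

Lemma card_fset_set_image (U : choiceType) (f : T -> U) A : finite_set A ->
  {in A &, injective f} -> #|` fset_set (f @` A)| = #|` fset_set A|.
Proof.
move=> finA f_inj; rewrite fset_set_image // card_in_imfset // => x y.
by rewrite !in_fset_set //; exact: f_inj.
Qed.

Lemma card_fset_set_seq (s : seq T) (P : pred T) : uniq s ->
  #|` fset_set [set t | t \in s /\ P t]| = count P s.
Proof.
move=> s_uniq.
have -> : [set t | t \in s /\ P t] = [set` [fset t in [seq t <- s | P t]]%fset].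
  apply/seteqP; split => t /=; rewrite inE mem_filter; first by case=> -> ->.
  by case/andP=> -> ->.
by rewrite set_fsetK card_fseq undup_id ?filter_uniq // size_filter.
Qed.

Lemma card_fset_set_mem (s : seq T) : uniq s -> #|` fset_set [set` s]| = size s.
Proof.
move=> s_uniq; rewrite -(count_predT s) -card_fset_set_seq //; congr #|` fset_set _|.
by apply/seteqP; split => t //= [].
Qed.

End FiniteSets.

Section RankSelection.
Variable R : realType.

Lemma exists_count_lt (s : seq R) k : uniq s -> (k <= size s)%N ->
  exists2 lam, lam \notin s & count (< lam) s = k.
Proof.
move=> s_uniq; rewrite leq_eqVlt => /orP[/eqP->|k_lt].
  have [lam gt_lam] := exists_gt_seq s; exists lam.
    by apply/negP => /gt_lam; rewrite ltxx.
  by apply/eqP; rewrite -all_count; apply/allP => y /gt_lam.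
pose rank a := count (< a) s.
have rank_lt a b : a \in s -> a < b -> (rank a < rank b)%N.
  move=> a_in ab; have := count_lt_le_mem a s; rewrite a_in => /leq_trans; apply.
  by apply: sub_count => y /= ya; exact: le_lt_trans ya ab.
have rank_inj : {in s &, injective rank}.
  move=> a b a_in b_in; apply: contra_eq; rewrite neq_lt => /orP[] lt.
    by rewrite ltn_eqF ?rank_lt.
  by rewrite gtn_eqF ?rank_lt.
have rank_size a : a \in s -> (rank a < size s)%N.
  by rewrite -count_lt_le_mem => /leq_trans; apply; exact: count_size.
(* rank is injective from s into [0, size s), hence onto *)
have [_ rank_onto] : (size (map rank s) = size (iota 0 (size s)))
    * (map rank s =i iota 0 (size s)).
  apply: uniq_min_size; first by rewrite map_inj_in_uniq.
    by move=> r /mapP[a a_in ->]; rewrite mem_iota rank_size.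
  by rewrite size_map size_iota.
have /mapP[a a_in ->] : k \in map rank s by rewrite rank_onto mem_iota.
pose near_a := [set b | b \in s /\ b != a].
have [e e_gt0 e_lt] : exists2 e, 0 < e & forall b, near_a b -> e < `|b - a|.
  apply: finite_gt0_lb => [|b [_]]; last by rewrite normr_gt0 subr_eq0.
  by apply: sub_finite_set (finite_seq s) => b [].
have a_lt_ae : (a < a - e) = false by apply/negbTE; rewrite -leNgt; lra.
have gap b : b \in s -> (b < a - e) = (b < a).
  move=> b_in; have [->|ba] := eqVneq b a; first by rewrite ltxx a_lt_ae.
  have := e_lt b (conj b_in ba); rewrite ltr_normr.
  by case/orP => ?; apply/idP/idP => ?; lra.
exists (a - e); last by apply: eq_in_count => b /gap.
by apply/negP => /gap; rewrite ltxx => /esym/negbT; rewrite -leNgt; lra.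
Qed.

End RankSelection.

Section MetricFacts.
Variables (R : realType) (T : Type) (dst : T -> T -> R).
Hypotheses (dst_xx : forall x, dst x x = 0)
  (dst_tri : forall x y z, dst x z <= dst x y + dst y z).
Implicit Types A B : set T.

Lemma minterior_sub A : minterior dst A `<=` A.
Proof. by move=> x [e e_gt0]; apply; rewrite /oball /= dst_xx. Qed.

Lemma minterior_id A : minterior dst (minterior dst A) = minterior dst A.
Proof.
apply/seteqP; split; first exact: minterior_sub.
move=> x [e e_gt0 xA]; exists (e / 2); first by rewrite divr_gt0.
move=> y xy; exists (e / 2); first by rewrite divr_gt0.
move=> z yz; apply: xA; rewrite /oball /= in xy yz *.
by have := dst_tri x y z; lra.
Qed.

Lemma mclosure_sub A B : A `<=` B -> mclosure dst A `<=` mclosure dst B.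
Proof. by move=> AB x xA e /xA[y /AB]; exists y. Qed.

Lemma mboundary_regular_closed A : mclosed dst A ->
  A `<=` mclosure dst (minterior dst A) ->
  mboundary dst A = mboundary dst (minterior dst A).
Proof.
move=> A_closed A_reg; rewrite /mboundary minterior_id; congr (_ `\` _).
apply/seteqP; split => [x /A_closed /A_reg //|].
by apply: mclosure_sub; exact: minterior_sub.
Qed.

End MetricFacts.

Definition ties_breakable (R : realType) (T : eqType) (dst : T -> T -> R) :=
  forall x p (C : seq T) k e, uniq C ->
    (forall t, t \in C -> t <> p /\ dst x t = dst x p) -> (k <= size C)%N -> 0 < e ->
  exists y, [/\ dst x y < e, forall t, t \in C -> dst y t != dst y p
    & count (fun t => dst y t < dst y p) C = k].

Lemma quadric_ray_inj (R : realType) n (Q : 'rV[R]_n -> R) (v0 u u' : 'rV[R]_n) :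
    (forall c w, Q (c *: w) = c ^+ 2 * Q w) ->
    0 < Q u -> 0 < Q u' -> dotv v0 u = Q u -> dotv v0 u' = Q u' ->
  dotv v0 u' *: u = dotv v0 u *: u' -> u = u'.
Proof.
move=> Q_hom Qu_gt0 Qu'_gt0 -> -> uu'.
have : Q (Q u' *: u) = Q (Q u *: u') by rewrite uu'.
rewrite !Q_hom => Q2.
have Quu' : Q u = Q u'.
  have : Q u * Q u' * (Q u' - Q u) = Q u' ^+ 2 * Q u - Q u ^+ 2 * Q u' by ring.
  rewrite Q2 subrr => /eqP; rewrite !mulf_eq0 (gt_eqF Qu_gt0) (gt_eqF Qu'_gt0).
  by rewrite subr_eq0 => /eqP->.
by move: uu'; rewrite Quu' => /scalerI; apply; rewrite gt_eqF.
Qed.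

Definition perturbable (R : realType) (T : Type) (dst : T -> T -> R) N
    (pos : T -> 'rV[R]_N) :=
  forall x (v : 'rV[R]_N) e, 0 < e -> exists y, dst x y < e /\
    forall t p, dst x t = dst x p ->
      Num.sg (dst y t - dst y p) = Num.sg (dotv v (pos p - pos t)).

(* Seen from pos p, the points tied with p lie on a quadric {Q = <v0, .>} through
   the origin, which meets each open ray from the origin at most once. *)
Definition ties_on_quadric (R : realType) (T : Type) (dst : T -> T -> R) N
    (pos : T -> 'rV[R]_N) :=
  forall x p, exists v0 (Q : 'rV[R]_N -> R),
    (forall c u, Q (c *: u) = c ^+ 2 * Q u) /\
    forall t, dst x t = dst x p -> t <> p ->
      0 < Q (pos p - pos t) /\ dotv v0 (pos p - pos t) = Q (pos p - pos t).

Section TieBreaking.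
Variables (R : realType) (T : eqType) (dst : T -> T -> R) (N : nat).
Variable pos : T -> 'rV[R]_N.
Hypotheses (pos_inj : injective pos) (perturb : perturbable dst pos)
  (tie_quadric : ties_on_quadric dst pos).

Lemma quadric_ties_breakable : ties_breakable dst.
Proof.
move=> x p C k e C_uniq C_tied k_le e_gt0.
have [v0 [Q [Q_hom Q_tied]]] := tie_quadric x p.
pose u t := pos p - pos t.
have Qu_gt0 t : t \in C -> 0 < Q (u t).
  by case/C_tied => tp xt; have [] := Q_tied t xt tp.
have v0u t : t \in C -> dotv v0 (u t) = Q (u t).
  by case/C_tied => tp xt; have [] := Q_tied t xt tp.
pose F t s := dotv v0 (u s) *: u t - dotv v0 (u t) *: u s.
have [w w_sep] : exists w, forall c,
    c \in [seq c <- [seq F t s | t <- C, s <- C] | c != 0] -> dotv w c != 0.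
  by apply: exists_nonorthogonal => c; rewrite mem_filter => /andP[].
(* w separates the rays u t, so the slopes rho t are distinct; moving x along
   w - lam v0 brings t closer than p exactly when rho t < lam *)
pose rho t := dotv w (u t) / dotv v0 (u t).
have rho_inj : {in C &, injective rho}.
  move=> t s t_in s_in; apply: contra_eq => ts.
  have F_neq0 : F t s != 0.
    rewrite subr_eq0; apply: contra_neq ts => /(quadric_ray_inj Q_hom).
    by rewrite !(Qu_gt0, v0u) // => /(_ isT isT erefl erefl) /addrI/oppr_inj/pos_inj.
  have := w_sep (F t s); rewrite mem_filter F_neq0 allpairs_f // => /(_ isT).
  apply: contra => /eqP rho_ts; rewrite dotvBr !dotvZr.
  have -> : dotv v0 (u s) * dotv w (u t) - dotv v0 (u t) * dotv w (u s)
      = dotv v0 (u t) * dotv v0 (u s) * (rho t - rho s).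
    by rewrite /rho; field; rewrite !v0u // !gt_eqF ?Qu_gt0.
  by rewrite rho_ts subrr mulr0.
have [lam lam_notin count_lam] : exists2 lam, lam \notin map rho C
    & count (< lam) (map rho C) = k.
  by apply: exists_count_lt; rewrite ?map_inj_in_uniq ?size_map.
have [y [xy y_sg]] := perturb x (w - lam *: v0) e_gt0.
have sg_rho t : t \in C -> Num.sg (dst y t - dst y p) = Num.sg (rho t - lam).
  move=> t_in; rewrite y_sg; last by have [] := C_tied t t_in.
  rewrite -/(u t) dotvBl dotvZl.
  have -> : dotv w (u t) - lam * dotv v0 (u t) = dotv v0 (u t) * (rho t - lam).
    by rewrite /rho; field; rewrite v0u // gt_eqF ?Qu_gt0.
  by rewrite sgrM gtr0_sg ?mul1r // v0u // Qu_gt0.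
exists y; split => // [t t_in|].
  rewrite -subr_eq0 -sgr_eq0 sg_rho // sgr_eq0 subr_eq0.
  by apply: contraNneq lam_notin => <-; exact: map_f.
rewrite -count_lam count_map; apply: eq_in_count => t t_in /=.
by rewrite -subr_lt0 -sgr_lt0 sg_rho // sgr_lt0 subr_lt0.
Qed.

End TieBreaking.

Definition bisector (R : realType) (T : Type) (dst : T -> T -> R) (p t : T) : set T :=
  [set y | dst y t = dst y p].

Section NearestPoints.
Variables (R : realType) (T : choiceType) (dst : T -> T -> R).
Hypotheses (dst_sym : forall x y, dst x y = dst y x) (dst_xx : forall x, dst x x = 0)
  (dst_tri : forall x y z, dst x z <= dst x y + dst y z).
Variables (S : set T) (n : nat).
Hypothesis S_ball_finite : forall x r, finite_set [set s | S s /\ dst x s <= r].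

Definition closer x p := [set s | S s /\ dst x s < dst x p].
Definition no_farther x p := [set s | S s /\ dst x s <= dst x p].
Definition tied x p := [set s | S s /\ dst x s = dst x p].

(* [p] may come n-th when the points of [S] are listed by increasing distance to [x] *)
Definition nth_nearest x p :=
  (#|` fset_set (closer x p)| < n <= #|` fset_set (no_farther x p)|)%N.

Lemma dst_ge0 x y : 0 <= dst x y.
Proof. by have := dst_tri x y x; rewrite dst_xx (dst_sym y x); lra. Qed.

Lemma no_farther_finite x p : finite_set (no_farther x p).
Proof. exact: S_ball_finite. Qed.

Lemma closer_finite x p : finite_set (closer x p).
Proof. by apply: sub_finite_set (no_farther_finite x p) => s [Ss /ltW]. Qed.

Lemma tied_finite x p : finite_set (tied x p).
Proof.
by apply: sub_finite_set (no_farther_finite x p) => s [Ss xs]; split; rewrite // xs.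
Qed.

Lemma no_farther_closerU x p : no_farther x p = closer x p `|` tied x p.
Proof.
apply/seteqP; split => s /=.
  by case=> Ss; rewrite le_eqVlt => /predU1P[]; [right|left].
by case=> -[Ss xs]; split; rewrite // le_eqVlt xs ?eqxx ?orbT.
Qed.

Lemma card_no_farther x p : #|` fset_set (no_farther x p)| =
  (#|` fset_set (closer x p)| + #|` fset_set (tied x p)|)%N.
Proof.
rewrite no_farther_closerU card_fset_setU //; [exact: closer_finite|exact: tied_finite|].
by apply/seteqP; split => // s [[_ lt] [_ eq]]; move: lt; rewrite eq ltxx.
Qed.

Lemma brillouin_nth_nearest x0 x : S x0 ->
  brillouin dst S n x0 x <-> nth_nearest x x0.
Proof.
move=> S_x0; have closerE : oball dst x (dst x x0) `&` S = closer x x0.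
  by apply/seteqP; split => s [].
have tiedE : sphere_at dst x (dst x x0) `&` S = tied x x0.
  by apply/seteqP; split => s [].
rewrite /nth_nearest card_no_farther; split.
  case=> m [l [_ []]]; rewrite closerE tiedE.
  by move=> /card_fset_set-> [/card_fset_set-> le_n]; apply/andP; lia.
case/andP=> lt_n n_le; exists #|` fset_set (closer x x0)|, #|` fset_set (tied x x0)|.
split.
  have : [set x0] `<=` tied x x0 by move=> _ ->.
  by move/card_fset_set_le; rewrite fset_set1 cardfs1; apply; exact: tied_finite.
rewrite closerE tiedE; split; first exact/card_eq_fset_set/closer_finite.
by split; [exact/card_eq_fset_set/tied_finite | lia].
Qed.

Lemma nth_nearest_dst y p q : nth_nearest y p -> nth_nearest y q -> dst y p = dst y q.
Proof.
(* if p were strictly closer than q, n points of S would be strictly closer than q *)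
wlog pq : p q / dst y p < dst y q.
  move=> wlog_pq yp yq; have [pq|qp|//] := ltrgtP (dst y p) (dst y q).
    exact: wlog_pq.
  by apply/esym; apply: wlog_pq.
case/andP=> _ n_le /andP[lt_n _].
suff : (#|` fset_set (no_farther y p)| <= #|` fset_set (closer y q)|)%N by lia.
apply: card_fset_set_le; first exact: closer_finite.
by move=> s [Ss ys]; split => //; exact: le_lt_trans pq.
Qed.

Lemma exists_nth_nearest x : (0 < n)%N -> `I_n #<= S -> exists2 p, S p & nth_nearest x p.
Proof.
move=> n_gt0 /card_subP[A A_n AS].
have finA : finite_set A by apply/finite_setP; exists n.
have [p1 Ap1 p1_max] : exists2 p1, A p1 & forall a, A a -> dst x a <= dst x p1.
  apply: finite_argmax finA _; apply/set0P/negP => /eqP A0.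
  by move: A_n; rewrite A0 => /card_fset_set; rewrite fset_set0 cardfs0; lia.
pose cand :=
  [set p | (S p /\ dst x p <= dst x p1) /\ (n <= #|` fset_set (no_farther x p)|)%N].
have cand_p1 : cand p1.
  split; first by split; [exact: AS|].
  rewrite -(card_fset_set A_n); apply: card_fset_set_le; first exact: no_farther_finite.
  by move=> a Aa; split; [exact: AS|exact: p1_max].
have [|p [[Sp _] n_le] p_min] := finite_argmin (dst x) _ (ex_intro _ p1 cand_p1).
  by apply: sub_finite_set (S_ball_finite x (dst x p1)) => p [].
exists p => //; apply/andP; split => //; rewrite ltnNge; apply/negP => n_le_closer.
have [q [Sq qp] q_max] : exists2 q, closer x p q &
    forall s, closer x p s -> dst x s <= dst x q.
  apply: finite_argmax (closer_finite x p) _; apply/set0P/negP => /eqP closer0.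
  by move: n_le_closer; rewrite closer0 fset_set0 cardfs0; lia.
suff /p_min : cand q by rewrite leNgt qp.
split; first by split => //; apply/ltW/(lt_le_trans qp); case: (p_min p1 cand_p1).
(* no point of S lies strictly between q and p *)
suff -> : no_farther x q = closer x p by [].
apply/seteqP; split => s [Ss xs]; split => //; first exact: le_lt_trans qp.
by apply: q_max.
Qed.

Lemma nth_nearest_isometry g x p : (forall x y, dst (g x) (g y) = dst x y) ->
  injective g -> g @` S = S -> nth_nearest x p -> nth_nearest (g x) (g p).
Proof.
move=> g_iso g_inj gS.
have imageE (c : R -> R -> bool) : [set s | S s /\ c (dst (g x) s) (dst (g x) (g p))]
    = g @` [set s | S s /\ c (dst x s) (dst x p)].
  rewrite -[in LHS]gS; apply/seteqP; split => [_ [[s Ss <-]]|_ [s [Ss cs] <-]].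
    by rewrite !g_iso => cs; exists s.
  by split; [exists s | rewrite !g_iso].
rewrite /nth_nearest /closer /no_farther (imageE (fun a b => a < b)).
rewrite (imageE (fun a b => a <= b)) !card_fset_set_image //.
all: try exact: closer_finite; exact: in2W.
Qed.

Lemma near_closer x p : exists2 eta, 0 < eta & forall y, dst x y < eta ->
  closer y p = closer x p `|` [set t | tied x p t /\ dst y t < dst y p] /\
  no_farther y p = closer x p `|` [set t | tied x p t /\ dst y t <= dst y p].
Proof.
pose near := [set s | S s /\ dst x s <= dst x p + 1 /\ dst x s != dst x p].
have [del del_gt0 del_lt] : exists2 del, 0 < del &
    forall s, near s -> del < `|dst x s - dst x p|.
  apply: finite_gt0_lb => [|s [_ [_]]]; last by rewrite normr_gt0 subr_eq0.
  by apply: sub_finite_set (S_ball_finite x (dst x p + 1)) => s [? []].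
pose eta := Num.min del 1 / 2.
have eta_gt0 : 0 < eta by rewrite divr_gt0 // lt_min del_gt0 ltr01.
have gap s : S s -> dst x s != dst x p -> 2 * eta < `|dst x s - dst x p|.
  have : Num.min del 1 <= del /\ Num.min del 1 <= 1 by rewrite !ge_min !lexx orbT.
  case=> m_del m_1 Ss sp; have [near_s|far_s] := leP (dst x s) (dst x p + 1).
    by have := del_lt s (conj Ss (conj near_s sp)); rewrite /eta; lra.
  by rewrite gtr0_norm /eta; lra.
have side s y : S s -> dst x s != dst x p -> dst x y < eta ->
    (dst y s < dst y p) = (dst x s < dst x p)
    /\ (dst y s <= dst y p) = (dst x s <= dst x p).
  move=> Ss sp xy; have := gap s Ss sp; rewrite ltr_normr.
  have := dst_tri y x s; have := dst_tri x y s; have := dst_tri y x p.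
  have := dst_tri x y p; rewrite (dst_sym y x) => ? ? ? ?.
  by case/orP => ?; split; apply/idP/idP => ?; lra.
exists eta => // y xy; split; apply/seteqP; split => s /=.
- case=> Ss; have [xs|xs|xs] := ltrgtP (dst x s) (dst x p); [by left | | by right].
  by have [-> _] := side s y Ss (negbT (gt_eqF xs)) xy; rewrite ltNge (ltW xs).
- case=> [[Ss xs]|[[Ss _] ys]]; split => //.
  by have [-> _] := side s y Ss (negbT (lt_eqF xs)) xy.
- case=> Ss; have [xs|xs|xs] := ltrgtP (dst x s) (dst x p); [by left | | by right].
  by have [_ ->] := side s y Ss (negbT (gt_eqF xs)) xy; rewrite leNgt xs.
- case=> [[Ss xs]|[[Ss _] ys]]; split => //.
  by have [_ ->] := side s y Ss (negbT (lt_eqF xs)) xy; exact: ltW.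
Qed.

Variable x0 : T.
Hypothesis S_x0 : S x0.
Local Notation B := (brillouin dst S n x0).

Lemma brillouin_closed : mclosed dst B.
Proof.
move=> x x_cl; apply/(brillouin_nth_nearest _ S_x0).
have [eta eta_gt0 near] := near_closer x x0.
have [y /(brillouin_nth_nearest _ S_x0)/andP[lt_n n_le] xy] := x_cl eta eta_gt0.
have [closer_y no_farther_y] := near y xy; apply/andP; split.
  apply: leq_ltn_trans lt_n; apply: card_fset_set_le; first exact: closer_finite.
  by rewrite closer_y; left.
apply: leq_trans n_le _; apply: card_fset_set_le; first exact: no_farther_finite.
by rewrite no_farther_y => s [[Ss /ltW xs]|[[Ss xs] _]]; split; rewrite // xs ?lexx.
Qed.

Lemma untied_interior x : nth_nearest x x0 -> (forall t, tied x x0 t -> t = x0) ->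
  minterior dst B x.
Proof.
move=> x_nth untied; have [eta eta_gt0 near] := near_closer x x0.
exists eta => // y /= /near[closer_y no_farther_y].
apply/(brillouin_nth_nearest _ S_x0); rewrite /nth_nearest closer_y no_farther_y.
have -> : [set t | tied x x0 t /\ dst y t < dst y x0] = set0.
  by apply/seteqP; split => // t [/untied ->]; rewrite ltxx.
have -> : [set t | tied x x0 t /\ dst y t <= dst y x0] = tied x x0.
  by apply/seteqP; split => [t []//|t t_tied]; split; rewrite // (untied t t_tied).
by rewrite setU0 -no_farther_closerU.
Qed.

Lemma mboundary_brillouin_tied x : mboundary dst B x ->
  exists2 t, (S `\ x0) t & bisector dst x0 t x.
Proof.
case=> /brillouin_closed x_B x_int; apply: contrapT => untied; apply: x_int.
apply: untied_interior => [|t [St xt]]; first exact/(brillouin_nth_nearest _ S_x0).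
by apply: contrapT => tx0; apply: untied; exists t.
Qed.

Lemma mboundary_brillouin_sub :
  mboundary dst B `<=` \bigcup_(H in bisector dst x0 @` (S `\ x0)) H.
Proof.
by move=> x /mboundary_brillouin_tied[t St xt]; exists (bisector dst x0 t) => //; exists t.
Qed.

Lemma bisectors_locally_finite : locally_finite dst (bisector dst x0 @` (S `\ x0)).
Proof.
move=> x; exists 1 => //.
apply: sub_finite_set (finite_image (bisector dst x0) (S_ball_finite x (dst x x0 + 2))).
move=> _ [[t [St _] <-] [y yt xy]]; exists t => //; split => //.
have := dst_tri x y t; have := dst_tri y x x0; have := dst_ge0 x y.
by rewrite (dst_sym y x) /bisector /= in yt *; lra.
Qed.

Lemma tied_enum x : exists C : seq T,
  [/\ uniq C, x0 \notin C & tied x x0 = x0 |` [set` C]].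
Proof.
have /finite_fsetP[X X_eq] : finite_set (tied x x0 `\ x0).
  exact/finite_setD/tied_finite.
exists X; split; first exact: fset_uniq.
  by apply/negP => x0X; have : [set` X] x0 by []; rewrite -X_eq => -[_]; apply.
by rewrite -X_eq; apply/esym/setD1K; split.
Qed.

Lemma tie_break_closer x y (C : seq T) : tied x x0 = x0 |` [set` C] ->
    closer y x0 = closer x x0 `|` [set t | tied x x0 t /\ dst y t < dst y x0] ->
    no_farther y x0 = closer x x0 `|` [set t | tied x x0 t /\ dst y t <= dst y x0] ->
    (forall t, t \in C -> dst y t != dst y x0) ->
  closer y x0 = closer x x0 `|` [set t | t \in C /\ dst y t < dst y x0]
  /\ tied y x0 = [set x0].
Proof.
move=> tied_x closer_y no_farther_y y_untied.
have tied_xP t : tied x x0 t <-> t = x0 \/ t \in C by rewrite tied_x.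
split.
  rewrite closer_y; congr (_ `|` _); apply/seteqP; split => t /=.
    move=> [/tied_xP[tx0|t_in] yt]; last by split.
    by move: yt; rewrite tx0 ltxx.
  by case=> t_in yt; split => //; apply/tied_xP; right.
apply/seteqP; split => [t [St yt]|_ ->]; last by split.
have : no_farther y x0 t by split; rewrite // yt.
rewrite no_farther_y => -[xt|[/tied_xP[//|t_in] _]].
  have [_] : closer y x0 t by rewrite closer_y; left.
  by rewrite yt ltxx.
by move: (y_untied t t_in); rewrite yt eqxx.
Qed.

Hypothesis breakable : ties_breakable dst.

Lemma brillouin_regular : B `<=` mclosure dst (minterior dst B).
Proof.
move=> x /(brillouin_nth_nearest _ S_x0)/andP[lt_n n_le] e e_gt0.
have [eta eta_gt0 near] := near_closer x x0.
have [C [C_uniq x0_notin tied_x]] := tied_enum x.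
have C_tied t : t \in C -> t <> x0 /\ dst x t = dst x x0.
  move=> t_in; split; first by move=> tx0; rewrite -tx0 t_in in x0_notin.
  by have [] : tied x x0 t by rewrite tied_x; right.
pose m := #|` fset_set (closer x x0)|.
have card_tied : #|` fset_set (tied x x0)| = (size C).+1.
  rewrite tied_x card_fset_setU ?fset_set1 ?cardfs1 ?card_fset_set_mem //.
  by apply/seteqP; split => // _ [-> /=]; apply/negP.
have k_le : (n.-1 - m <= size C)%N by move: n_le; rewrite card_no_farther card_tied; lia.
have [|y [xy y_untied y_count]] := breakable C_uniq C_tied k_le (e := Num.min e eta).
  by rewrite lt_min e_gt0.
move: xy; rewrite lt_min => /andP[xy_e /near[closer_y no_farther_y]].
have [closer_yE tied_y] := tie_break_closer tied_x closer_y no_farther_y y_untied.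
have card_closer_y : #|` fset_set (closer y x0)| = n.-1.
  rewrite closer_yE card_fset_setU ?card_fset_set_seq // ?y_count /m; first lia.
  - exact: closer_finite.
  - by apply: sub_finite_set (finite_seq C) => t [].
  apply/seteqP; split => // t [[_ xt] [/C_tied[_ xt0] _]].
  by move: xt; rewrite xt0 ltxx.
exists y => //; apply: untied_interior => [|t]; last by rewrite tied_y.
by rewrite /nth_nearest card_no_farther tied_y fset_set1 cardfs1 card_closer_y; lia.
Qed.

End NearestPoints.

Section Orbits.
Variables (R : realType) (T : choiceType) (dst : T -> T -> R).
Hypotheses (dst_sym : forall x y, dst x y = dst y x) (dst_xx : forall x, dst x x = 0)
  (dst_tri : forall x y z, dst x z <= dst x y + dst y z).
Variables (G : set (T -> T)) (x0 : T).
Hypotheses (G_isom : isometry_group dst G) (G_disc : discontinuous_group dst G).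
Local Notation S := (gorbit G x0).

Lemma isometry_groupV g : G g ->
  exists2 h, G h & (forall x, h (g x) = x) /\ (forall x, g (h x) = x).
Proof.
case: G_isom => _ _ G_inv _ /G_inv[h Gh [hg gh]].
by exists h => //; split => x; [exact: (congr1 (@^~ x) hg) | exact: (congr1 (@^~ x) gh)].
Qed.

Lemma isometry_group_comp g h : G g -> G h -> G (g \o h).
Proof. by case: G_isom => _ G_comp _ _; exact: G_comp. Qed.

Lemma isometry_group_dst g : G g -> forall x y, dst (g x) (g y) = dst x y.
Proof. by case: G_isom => _ _ _ G_iso /G_iso[]. Qed.

Lemma isometry_group_inj g : G g -> injective g.
Proof. by move=> /isometry_groupV[h _ [hg _]] x y /(congr1 h); rewrite !hg. Qed.

Lemma gorbit_x0 : S x0.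
Proof. by exists id => //; case: G_isom. Qed.

Lemma gorbit_image g : G g -> g @` S = S.
Proof.
move=> Gg; have [h Gh [_ gh]] := isometry_groupV Gg.
apply/seteqP; split => [_ [_ [f Gf <-] <-]|s [f Gf <-]].
  by exists (g \o f) => //; exact: isometry_group_comp.
by exists (h (f x0)); [exists (h \o f) => //; exact: isometry_group_comp | exact: gh].
Qed.

Lemma gorbit_ball_finite x r : finite_set [set s | S s /\ dst x s <= r].
Proof.
have r'_gt0 : 0 < Num.max 1 (Num.max r (dst x x0)) by rewrite lt_max ltr01.
apply: sub_finite_set (finite_image (@^~ x0) (G_disc x r'_gt0)).
move=> s [[g Gg <-] xs]; exists g => //; split => //; exists x0.
by rewrite !le_max lexx xs !orbT.
Qed.

Variable n : nat.
Local Notation B := (brillouin dst S n x0).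

Lemma brillouin_gorbitP x : B x <-> nth_nearest dst S n x x0.
Proof. exact: (brillouin_nth_nearest n gorbit_ball_finite x gorbit_x0). Qed.

Lemma nth_nearest_gorbit g x p : G g ->
  nth_nearest dst S n x p -> nth_nearest dst S n (g x) (g p).
Proof.
move=> Gg; apply: (nth_nearest_isometry gorbit_ball_finite).
- exact: isometry_group_dst Gg.
- exact: isometry_group_inj Gg.
- exact: gorbit_image Gg.
Qed.

Lemma brillouin_cover x : (0 < n)%N -> `I_n #<= S -> exists2 g, G g & (g @` B) x.
Proof.
move=> n_gt0 n_le.
have [p [g Gg <-] x_gx0] := exists_nth_nearest gorbit_ball_finite x n_gt0 n_le.
have [h Gh [hg gh]] := isometry_groupV Gg.
exists g => //; exists (h x); last exact: gh.
by apply/brillouin_gorbitP; have := nth_nearest_gorbit Gh x_gx0; rewrite hg.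
Qed.

Hypothesis breakable : ties_breakable dst.
Hypothesis x0_free : trivial_stabilizer G x0.

Lemma brillouin_interiors_disjoint g h : G g -> G h -> g <> h ->
  g @` minterior dst B `&` h @` minterior dst B = set0.
Proof.
move=> Gg Gh gh; apply/seteqP; split => // z.
case=> -[a [e1 e1_gt0 a_int] <-] [b [e2 e2_gt0 b_int] hbz].
have [g' _ [_ gg']] := isometry_groupV Gg.
have [h' Gh' [h'h hh']] := isometry_groupV Gh.
have gx0_hx0 : g x0 <> h x0.
  move=> ghx0; apply: gh; apply/funext => x.
  have h'g_id : h' \o g = id.
    by apply: x0_free; [exact: isometry_group_comp | rewrite /= ghx0 h'h].
  by rewrite -[LHS]hh' -/((h' \o g) x) h'g_id.
(* near g a, both g x0 and h x0 are n-th nearest, hence equidistant *)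
have nearest_both y : dst (g a) y < Num.min e1 e2 -> dst y (g x0) = dst y (h x0).
  rewrite lt_min => /andP[y1 y2]; apply: (nth_nearest_dst (n := n) gorbit_ball_finite).
  - have /brillouin_gorbitP/(nth_nearest_gorbit Gg) : B (g' y).
      by apply: a_int; rewrite /oball /= -(isometry_group_dst Gg) gg'.
    by rewrite gg'.
  - have /brillouin_gorbitP/(nth_nearest_gorbit Gh) : B (h' y).
      by apply: b_int; rewrite /oball /= -(isometry_group_dst Gh) hh' hbz.
    by rewrite hh'.
have e_gt0 : 0 < Num.min e1 e2 by rewrite lt_min e1_gt0.
have tied_a t : t \in [:: g x0] -> t <> h x0 /\ dst (g a) t = dst (g a) (h x0).
  by rewrite inE => /eqP->; split => //; apply: nearest_both; rewrite dst_xx.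
have [y [ay y_untied _]] := breakable (C := [:: g x0]) (k := 0%N) isT tied_a isT e_gt0.
by move: (y_untied _ (mem_head _ _)); rewrite nearest_both // eqxx.
Qed.

Theorem brillouin_fundamental_domain (hyperplane : set T -> Prop) :
    (forall p t, p <> t -> hyperplane (bisector dst p t)) ->
    (1 <= n)%N -> `I_n #<= S ->
  [/\ fundamental_domain dst G B,
      (exists2 HH : set (set T), (forall H, HH H -> hyperplane H) /\ locally_finite dst HH
       & mboundary dst B `<=` \bigcup_(H in HH) H)
    & mboundary dst B = mboundary dst (minterior dst B)].
Proof.
move=> bisector_hyp n_gt0 n_le.
have B_closed := brillouin_closed dst_sym dst_tri gorbit_ball_finite gorbit_x0.
split.
- split => // [x|]; [exact: brillouin_cover | exact: brillouin_interiors_disjoint].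
- exists (bisector dst x0 @` (S `\ x0)).
    split; last exact: bisectors_locally_finite gorbit_ball_finite x0.
    by move=> _ [t [_ tx0] <-]; apply: bisector_hyp => x0t; apply: tx0.
  exact: (mboundary_brillouin_sub dst_sym dst_tri gorbit_ball_finite gorbit_x0).
apply: mboundary_regular_closed => //.
exact: (brillouin_regular dst_sym dst_tri gorbit_ball_finite gorbit_x0 breakable).
Qed.

End Orbits.

HB.instance Definition _ (R : realType) k d := gen_eqMixin (mpoint R k d).
HB.instance Definition _ (R : realType) k d := gen_choiceMixin (mpoint R k d).

Section ModelPoints.
Variable R : realType.

Lemma mpoint_inj k d (x y : mpoint R k d) : sval x = sval y -> x = y.
Proof.
by case: x y => [a pa] [b pb] /= ab; subst b; congr exist; exact: Prop_irrelevance.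
Qed.

Lemma sgrB_mono (f : R -> R) (D : pred R) : {in D &, {mono f : x y / x < y}} ->
  {in D &, forall a b, Num.sg (f a - f b) = Num.sg (a - b)}.
Proof.
move=> f_mono a b aD bD; have [ab|ba|->] := ltrgtP a b; last by rewrite !subrr.
  by rewrite !ltr0_sg // subr_lt0 // f_mono.
by rewrite !gtr0_sg // subr_gt0 // f_mono.
Qed.

Lemma dotvv_scale n c (u : 'rV[R]_n) : dotv (c *: u) (c *: u) = c ^+ 2 * dotv u u.
Proof. by rewrite dotvZl dotvZr mulrA -expr2. Qed.

Lemma dotv_half_sqr n (a b : 'rV[R]_n) : dotv a a = dotv b b ->
  dotv a (a - b) = dotv (a - b) (a - b) / 2.
Proof. by move=> ab; rewrite !dotvBl !dotvBr (dotvC b a) ab; field. Qed.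

End ModelPoints.

Section Euclid.
Variables (R : realType) (d : nat).
Local Notation T := (mpoint R Euclid d).
Local Notation dst := (@geo_dist R Euclid d).

Lemma euclid_dstE (x y : T) :
  dst x y = Num.sqrt (dotv (sval x - sval y) (sval x - sval y)).
Proof. by []. Qed.

Lemma euclid_dst_sym (x y : T) : dst x y = dst y x.
Proof. by rewrite !euclid_dstE -opprB dotvvN. Qed.

Lemma euclid_dst_xx (x : T) : dst x x = 0.
Proof. by rewrite euclid_dstE subrr dotv0l sqrtr0. Qed.

Lemma sqrt_dotv_triangle n (a b : 'rV[R]_n) :
  Num.sqrt (dotv (a + b) (a + b)) <= Num.sqrt (dotv a a) + Num.sqrt (dotv b b).
Proof.
rewrite -(ger0_norm (addr_ge0 (sqrtr_ge0 (dotv a a)) (sqrtr_ge0 (dotv b b)))).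
rewrite -sqrtr_sqr ler_sqrt ?sqr_ge0 // sqrrD !sqr_sqrtr ?dotvv_ge0 //.
rewrite dotvDl !dotvDr (dotvC b a).
by have := norm_dotv_le a b; have := ler_norm (dotv a b); lra.
Qed.

Lemma euclid_dst_tri (x y z : T) : dst x z <= dst x y + dst y z.
Proof.
rewrite !euclid_dstE.
have -> : sval x - sval z = (sval x - sval y) + (sval y - sval z) by rewrite addrA subrK.
exact: sqrt_dotv_triangle.
Qed.

Lemma euclid_tied (x t p : T) : dst x t = dst x p ->
  dotv (sval x - sval t) (sval x - sval t) = dotv (sval x - sval p) (sval x - sval p).
Proof. by rewrite !euclid_dstE => /eqP; rewrite eqr_sqrt ?dotvv_ge0 // => /eqP. Qed.

Lemma sgr_sqrtB (a b : R) : 0 <= a -> 0 <= b ->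
  Num.sg (Num.sqrt a - Num.sqrt b) = Num.sg (a - b).
Proof.
move=> a_ge0 b_ge0; apply: (sgrB_mono (D := [pred c | 0 <= c])); rewrite ?inE //.
move=> c c'; rewrite !inE => c_ge0 c'_ge0.
have [->|c'_neq0] := eqVneq c' 0; first by rewrite sqrtr0 !ltNge sqrtr_ge0 c_ge0.
by rewrite ltr_sqrt // lt_neqAle eq_sym c'_neq0.
Qed.

Lemma dotv_shiftB n (a b w : 'rV[R]_n) :
  dotv (a + w) (a + w) - dotv (b + w) (b + w) = dotv a a - dotv b b + 2 * dotv w (a - b).
Proof. by rewrite !dotvDl !dotvDr dotvNr (dotvC a w) (dotvC b w); ring. Qed.

Lemma euclid_perturbable : perturbable dst sval.
Proof.
move=> x v e e_gt0; pose c := Num.sqrt (dotv v v).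
have c_ge0 : 0 <= c := sqrtr_ge0 _.
pose eps := e / (2 * (c + 1)).
have eps_gt0 : 0 < eps by rewrite divr_gt0 // mulr_gt0 // ltr_pwDr.
exists (exist _ (sval x + eps *: v) I : T); split.
  rewrite euclid_dstE /= opprD addrA subrr add0r dotvvN dotvv_scale.
  rewrite sqrtrM ?sqr_ge0 // sqrtr_sqr ger0_norm ?ltW // -/c.
  have : eps * c <= eps * (c + 1) by rewrite ler_pM2l // lerDl.
  have -> : eps * (c + 1) = e / 2 by rewrite /eps; field; rewrite gt_eqF // ltr_pwDr.
  by lra.
move=> t p /euclid_tied tied_tp.
rewrite !euclid_dstE /= sgr_sqrtB ?dotvv_ge0 //.
rewrite (addrAC _ _ (- sval t)) (addrAC _ _ (- sval p)) dotv_shiftB.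
have -> : sval x - sval t - (sval x - sval p) = sval p - sval t.
  by rewrite opprB addrC subrKA.
rewrite tied_tp subrr add0r dotvZl mulrA sgrM gtr0_sg ?mul1r //.
by rewrite mulr_gt0.
Qed.

Lemma euclid_ties_on_quadric : ties_on_quadric dst sval.
Proof.
move=> x p; exists (sval p - sval x), (fun u => dotv u u / 2); split.
  by move=> c u; rewrite dotvv_scale mulrA.
move=> t /euclid_tied tied_tp tp; split.
  rewrite divr_gt0 // dotvv_gt0 subr_eq0.
  by apply/eqP => pt; apply: tp; exact/esym/mpoint_inj.
have -> : sval p - sval t = (sval p - sval x) - (sval t - sval x) by rewrite opprB subrKA.
apply: dotv_half_sqr.
by rewrite -(opprB (sval x) (sval p)) -(opprB (sval x) (sval t)) !dotvvN tied_tp.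
Qed.

Lemma euclid_bisector (p t : T) : p <> t -> model_hyperplane (bisector dst p t).
Proof.
move=> pt; pose b := (dotv (sval p) (sval p) - dotv (sval t) (sval t)) / 2.
exists [set z | dotv (sval p - sval t) z = b]; split.
  exists (sval p - sval t), b; split => //.
  by rewrite subr_eq0; apply/eqP => pt'; apply: pt; exact: mpoint_inj.
have sqrB (y q : 'rV[R]_d) : dotv (y - q) (y - q) = dotv y y - 2 * dotv q y + dotv q q.
  by rewrite !dotvBl !dotvBr (dotvC y q); ring.
apply/seteqP; split => y; rewrite /bisector /=.
  by move=> /eqP; rewrite eqr_sqrt ?dotvv_ge0 // !sqrB dotvBl /b => /eqP; lra.
by rewrite dotvBl /b => yb; congr Num.sqrt; rewrite !sqrB; lra.
Qed.

End Euclid.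

Section Acos.
Variable R : realType.

Lemma acos_itv (a : R) : -1 <= a <= 1 -> acos a \in `[0, pi].
Proof. by move=> a_itv; rewrite in_itv /= acos_ge0 // acos_lepi. Qed.

Lemma acos_lt (a b : R) : -1 <= a <= 1 -> -1 <= b <= 1 -> (acos a < acos b) = (b < a).
Proof.
move=> a_itv b_itv; have := ltr_cos (acos_itv a_itv) (acos_itv b_itv).
by rewrite !acosK ?in_itv.
Qed.

Lemma sgr_acosB (a b : R) : -1 <= a <= 1 -> -1 <= b <= 1 ->
  Num.sg (acos a - acos b) = Num.sg (b - a).
Proof.
move=> a_itv b_itv; have [ab|ba|->] := ltrgtP a b; last by rewrite !subrr.
  by rewrite !gtr0_sg // subr_gt0 // acos_lt.
by rewrite !ltr0_sg // subr_lt0 // acos_lt.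
Qed.

Lemma acos_inj (a b : R) : -1 <= a <= 1 -> -1 <= b <= 1 -> acos a = acos b -> a = b.
Proof. by move=> a_itv b_itv ab; rewrite -(acosK a_itv) -(acosK b_itv) ab. Qed.

End Acos.

Section Sphere.
Variables (R : realType) (d : nat).
Local Notation T := (mpoint R Sphere d).
Local Notation dst := (@geo_dist R Sphere d).

Lemma sphere_dstE (x y : T) : dst x y = acos (dotv (sval x) (sval y)).
Proof. by []. Qed.

Lemma sphere_unit (x : T) : dotv (sval x) (sval x) = 1.
Proof. exact: (proj2_sig x). Qed.

Lemma dotv_unit_itv n (a b : 'rV[R]_n) : dotv a a = 1 -> dotv b b = 1 ->
  -1 <= dotv a b <= 1.
Proof.
move=> a1 b1; have := cauchy_schwarz a b; rewrite a1 b1 mulr1 => ?.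
by apply/andP; split; nra.
Qed.

Lemma sphere_dotv_itv (x y : T) : -1 <= dotv (sval x) (sval y) <= 1.
Proof. exact: dotv_unit_itv (sphere_unit x) (sphere_unit y). Qed.

Lemma sphere_dst_sym (x y : T) : dst x y = dst y x.
Proof. by rewrite !sphere_dstE dotvC. Qed.

Lemma sphere_dst_xx (x : T) : dst x x = 0.
Proof. by rewrite sphere_dstE sphere_unit acos1. Qed.

(* Cauchy-Schwarz for the components of x and z orthogonal to y *)
Lemma dotv_unit_cosD n (x y z : 'rV[R]_n) :
    dotv x x = 1 -> dotv y y = 1 -> dotv z z = 1 ->
  dotv x y * dotv y z - Num.sqrt (1 - dotv x y ^+ 2) * Num.sqrt (1 - dotv y z ^+ 2)
  <= dotv x z.
Proof.
move=> x1 y1 z1; set x' := x - dotv x y *: y; set z' := z - dotv y z *: y.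
have x'x' : dotv x' x' = 1 - dotv x y ^+ 2.
  by rewrite !dotvBl !dotvBr !dotvZl !dotvZr x1 y1 (dotvC y x); ring.
have z'z' : dotv z' z' = 1 - dotv y z ^+ 2.
  by rewrite !dotvBl !dotvBr !dotvZl !dotvZr z1 y1 (dotvC z y); ring.
have x'z' : dotv x' z' = dotv x z - dotv x y * dotv y z.
  by rewrite !dotvBl !dotvBr !dotvZl !dotvZr y1; ring.
have := norm_dotv_le x' z'; rewrite x'z' x'x' z'z'.
by have := ler_norm (- (dotv x z - dotv x y * dotv y z)); rewrite normrN; lra.
Qed.

Lemma sphere_dst_tri (x y z : T) : dst x z <= dst x y + dst y z.
Proof.
rewrite !sphere_dstE.
set X := dotv (sval x) (sval y); set Y := dotv (sval y) (sval z).
have X_itv : -1 <= X <= 1 := sphere_dotv_itv x y.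
have Y_itv : -1 <= Y <= 1 := sphere_dotv_itv y z.
have XY_ge0 : 0 <= acos X + acos Y by rewrite addr_ge0 ?acos_ge0.
have [pi_le|lt_pi] := leP pi (acos X + acos Y).
  by apply: le_trans pi_le; apply/acos_lepi/sphere_dotv_itv.
have cos_le : cos (acos X + acos Y) <= dotv (sval x) (sval z).
  rewrite cosD !acosK ?in_itv //= !sin_acos //.
  exact: dotv_unit_cosD (sphere_unit x) (sphere_unit y) (sphere_unit z).
have cos_itv : -1 <= cos (acos X + acos Y) <= 1 by rewrite cos_geN1 cos_le1.
have XY_itv : acos X + acos Y \in `[0, pi] by rewrite in_itv /= XY_ge0 ltW.
by rewrite -[X in _ <= X](cosK XY_itv) leNgt acos_lt ?sphere_dotv_itv // -leNgt.
Qed.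

Lemma sphere_tied (x t p : T) : dst x t = dst x p ->
  dotv (sval x) (sval t) = dotv (sval x) (sval p).
Proof. by rewrite !sphere_dstE; apply: acos_inj; exact: sphere_dotv_itv. Qed.

Lemma sphere_step (x : T) (u : 'rV[R]_d.+1) th :
    dotv u u = 1 -> dotv (sval x) u = 0 -> 0 < th -> th < pi ->
  exists y : T, dst x y = th /\ exists2 c, 0 < c &
    forall a, dotv (sval x) a = 0 -> dotv (sval y) a = c * dotv u a.
Proof.
move=> u1 x_u th_gt0 th_lt_pi; have x1 := sphere_unit x.
pose yv := cos th *: sval x + sin th *: u.
have y1 : dotv yv yv = 1.
  rewrite /yv !dotvDl !dotvDr !dotvZl !dotvZr x1 u1 x_u (dotvC u) x_u.
  by rewrite !mulr1 !mulr0 !addr0 add0r -!expr2 cos2Dsin2.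
exists (exist _ yv y1 : T); split.
  rewrite sphere_dstE /= /yv dotvDr !dotvZr x1 x_u mulr1 mulr0 addr0 cosK //.
  by rewrite in_itv /= !ltW.
exists (sin th); first by rewrite sin_gt0_pi // th_gt0.
by move=> a x_a; rewrite /= /yv dotvDl !dotvZl x_a mulr0 add0r.
Qed.

Lemma sphere_perturbable : perturbable dst sval.
Proof.
move=> x v e e_gt0; have x1 := sphere_unit x.
pose w := v - dotv v (sval x) *: sval x.
have x_w : dotv (sval x) w = 0.
  by rewrite /w dotvBr dotvZr x1 (dotvC (sval x) v) mulr1 subrr.
have w_tied (t p : T) : dst x t = dst x p ->
    dotv w (sval p - sval t) = dotv v (sval p - sval t).
  move=> /sphere_tied xtp.
  by rewrite /w dotvBl dotvZl [dotv (sval x) _]dotvBr xtp subrr mulr0 subr0.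
have [w0|w_neq0] := eqVneq w 0.
  exists x; split => [|t p xtp]; first by rewrite sphere_dst_xx.
  by rewrite xtp subrr -w_tied // w0 dotv0l.
have [c c_gt0 [u [u1 x_u u_w]]] : exists2 c, 0 < c & exists u,
    [/\ dotv u u = 1, dotv (sval x) u = 0 & forall a, dotv u a = c * dotv w a].
  have ww_gt0 : 0 < dotv w w by rewrite dotvv_gt0.
  exists (Num.sqrt (dotv w w))^-1; first by rewrite invr_gt0 sqrtr_gt0.
  exists ((Num.sqrt (dotv w w))^-1 *: w); split.
  - by rewrite dotvv_scale exprVn sqr_sqrtr ?mulVf ?gt_eqF // ltW.
  - by rewrite dotvZr x_w mulr0.
  - by move=> a; rewrite dotvZl.
pose th := Num.min (e / 2) 1.
have th_gt0 : 0 < th by rewrite lt_min ltr01 andbT divr_gt0.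
have [th_le_e th_le1] : th <= e / 2 /\ th <= 1 by rewrite !ge_min !lexx orbT.
have th_lt_e : th < e by lra.
have th_lt_pi : th < pi by have := @pi_ge2 R; lra.
have [y [xy [c' c'_gt0 y_u]]] := sphere_step u1 x_u th_gt0 th_lt_pi.
exists y; split; first by rewrite xy.
move=> t p xtp; rewrite !sphere_dstE sgr_acosB ?sphere_dotv_itv // -dotvBr.
rewrite y_u; last by rewrite dotvBr (sphere_tied xtp) subrr.
by rewrite u_w w_tied // mulrA sgrM gtr0_sg ?mul1r // mulr_gt0.
Qed.

Lemma sphere_ties_on_quadric : ties_on_quadric dst sval.
Proof.
move=> x p; exists (sval p), (fun u => dotv u u / 2); split.
  by move=> c u; rewrite dotvv_scale mulrA.
move=> t _ tp; split.
  rewrite divr_gt0 // dotvv_gt0 subr_eq0.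
  by apply/eqP => pt; apply: tp; exact/esym/mpoint_inj.
by apply: dotv_half_sqr; rewrite !sphere_unit.
Qed.

Lemma sphere_bisector (p t : T) : p <> t -> model_hyperplane (bisector dst p t).
Proof.
move=> pt; exists [set z | dotv (sval p - sval t) z = 0]; split.
  exists (sval p - sval t); split => //.
  by rewrite subr_eq0; apply/eqP => pt'; apply: pt; exact: mpoint_inj.
apply/seteqP; split => y; rewrite /bisector /= dotvBl !(dotvC _ (sval y)).
  by move=> /acos_inj ty; rewrite ty ?subrr //; exact: sphere_dotv_itv.
by move/eqP; rewrite subr_eq0 => /eqP->.
Qed.

End Sphere.

Section Lorentz.
Variables (R : realType) (d : nat).
Local Notation V := 'rV[R]_d.+1.
Local Notation L := (@lorentz R d).
Implicit Types u v w x y : V.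

Definition tcoord u := u 0 ord0.

Definition spatial u : V := \row_i (if i == ord0 then 0 else u 0 i).

Lemma dotv_tcoord u v :
  dotv u v = tcoord u * tcoord v + \sum_(i < d.+1 | i != ord0) u 0 i * v 0 i.
Proof. by rewrite /dotv (bigD1 ord0). Qed.

Lemma lorentzE u v : L u v = dotv u v - 2 * (tcoord u * tcoord v).
Proof. by rewrite /lorentz dotv_tcoord /tcoord; ring. Qed.

Lemma tcoordD u v : tcoord (u + v) = tcoord u + tcoord v.
Proof. by rewrite /tcoord mxE. Qed.

Lemma tcoordZ c u : tcoord (c *: u) = c * tcoord u.
Proof. by rewrite /tcoord mxE. Qed.

Lemma tcoordB u v : tcoord (u - v) = tcoord u - tcoord v.
Proof. by rewrite /tcoord !mxE. Qed.

Lemma lorentzC u v : L u v = L v u.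
Proof. by rewrite !lorentzE dotvC (mulrC (tcoord u)). Qed.

Lemma lorentzDl u v w : L (u + v) w = L u w + L v w.
Proof. by rewrite !lorentzE dotvDl tcoordD; ring. Qed.

Lemma lorentzDr u v w : L w (u + v) = L w u + L w v.
Proof. by rewrite !lorentzE dotvDr tcoordD; ring. Qed.

Lemma lorentzZl c u v : L (c *: u) v = c * L u v.
Proof. by rewrite !lorentzE dotvZl tcoordZ; ring. Qed.

Lemma lorentzZr c u v : L v (c *: u) = c * L v u.
Proof. by rewrite !lorentzE dotvZr tcoordZ; ring. Qed.

Lemma lorentzBl u v w : L (u - v) w = L u w - L v w.
Proof. by rewrite !lorentzE dotvBl tcoordB; ring. Qed.

Lemma lorentzBr u v w : L w (u - v) = L w u - L w v.
Proof. by rewrite !lorentzE dotvBr tcoordB; ring. Qed.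

Lemma lorentz0l v : L 0 v = 0.
Proof. by rewrite -(scale0r 0) lorentzZl mul0r. Qed.

Lemma lorentzvv_scale c u : L (c *: u) (c *: u) = c ^+ 2 * L u u.
Proof. by rewrite lorentzZl lorentzZr mulrA -expr2. Qed.

Lemma lorentz_spatialE u v : L u v = dotv (spatial u) (spatial v) - tcoord u * tcoord v.
Proof.
rewrite lorentzE [dotv (spatial u) _]dotv_tcoord [dotv u v]dotv_tcoord /tcoord !mxE eqxx.
rewrite mul0r add0r.
have -> : \sum_(i < d.+1 | i != ord0) spatial u 0 i * spatial v 0 i
    = \sum_(i < d.+1 | i != ord0) u 0 i * v 0 i.
  by apply: eq_bigr => i /negbTE i_neq0; rewrite !mxE i_neq0.
by ring.
Qed.

Lemma spatial_eq0 u : spatial u = 0 -> tcoord u = 0 -> u = 0.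
Proof.
move=> su0 tu0; apply/rowP => i; rewrite mxE.
have [->|i_neq0] := eqVneq i ord0; first exact: tu0.
by have := congr1 (fun z : V => z 0 i) su0; rewrite !mxE (negbTE i_neq0).
Qed.

Lemma lorentz_orth_ge0 x w : L x x = -1 -> L w x = 0 ->
  0 <= L w w /\ (L w w = 0 -> w = 0).
Proof.
rewrite !lorentz_spatialE.
set Sxx := dotv (spatial x) (spatial x); set Sww := dotv (spatial w) (spatial w).
set Swx := dotv (spatial w) (spatial x) => xx wx.
have cs := cauchy_schwarz (spatial w) (spatial x); rewrite -/Sxx -/Sww -/Swx in cs.
have Sxx_ge0 : 0 <= Sxx := dotvv_ge0 _.
have Sww_ge0 : 0 <= Sww := dotvv_ge0 _.
have Sxx_eq : Sxx = tcoord x ^+ 2 - 1 by rewrite expr2; lra.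
have Swx_eq : Swx = tcoord w * tcoord x by lra.
rewrite Sxx_eq Swx_eq in cs.
have tx2_ge1 : 1 <= tcoord x ^+ 2 by lra.
have null_w : Sww <= tcoord w ^+ 2 -> tcoord w = 0 /\ Sww = 0.
  move=> Sww_le.
  have cs' : tcoord w ^+ 2 * tcoord x ^+ 2 <= Sww * (tcoord x ^+ 2 - 1) by rewrite -exprMn.
  have Sww0 : Sww = 0 by nra.
  rewrite Sww0 mul0r in cs'; split => //.
  have : tcoord w ^+ 2 * tcoord x ^+ 2 = 0.
    by apply/eqP; rewrite eq_le cs' mulr_ge0 ?sqr_ge0.
  move/eqP; rewrite mulf_eq0 !expf_eq0 /= => /orP[/eqP//|/eqP tx0].
  by move: tx2_ge1; rewrite tx0 expr0n /= ler10.
split.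
  rewrite leNgt; apply/negP => lt0.
  have [tw0 Sww0] : tcoord w = 0 /\ Sww = 0 by apply: null_w; rewrite expr2; lra.
  by move: lt0; rewrite tw0 Sww0 mul0r subrr ltxx.
move=> ww0; have Sww_le : Sww <= tcoord w ^+ 2 by rewrite expr2; lra.
have [tw0 /eqP] := null_w Sww_le; rewrite dotvv_eq0 => /eqP sw0.
exact: spatial_eq0.
Qed.

End Lorentz.

Section Hacosh.
Variable R : realType.

Lemma hacosh_arg_ge1 (t : R) : 1 <= t -> 1 <= t + Num.sqrt (t ^+ 2 - 1).
Proof. by move=> t_ge1; have := sqrtr_ge0 (t ^+ 2 - 1); lra. Qed.

Lemma sqrt_sqrB1_le (a b : R) : 1 <= a -> a <= b ->
  Num.sqrt (a ^+ 2 - 1) <= Num.sqrt (b ^+ 2 - 1).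
Proof.
by move=> a_ge1 ab; apply: ler_wsqrtr; rewrite lerD2r ler_sqr // ?nnegrE; lra.
Qed.

Lemma hacosh_mono : {in [pred t : R | 1 <= t] &, {mono @hacosh R : a b / a < b}}.
Proof.
move=> a b; rewrite !inE => a_ge1 b_ge1; rewrite /hacosh.
have := hacosh_arg_ge1 a_ge1; have := hacosh_arg_ge1 b_ge1.
move=> ? ?; rewrite ltr_ln ?posrE; try lra.
have [ab|ba|->] := ltrgtP a b; last by rewrite ltxx.
  by have := sqrt_sqrB1_le a_ge1 (ltW ab); lra.
by have := sqrt_sqrB1_le b_ge1 (ltW ba); lra.
Qed.

Lemma hacosh1 : hacosh (1 : R) = 0.
Proof. by rewrite /hacosh expr1n subrr sqrtr0 addr0 ln1. Qed.

Lemma hacosh_le (a b : R) : 1 <= a -> 1 <= b -> (hacosh a <= hacosh b) = (a <= b).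
Proof. by move=> a_ge1 b_ge1; rewrite !leNgt hacosh_mono. Qed.

Lemma hacosh_inj (a b : R) : 1 <= a -> 1 <= b -> hacosh a = hacosh b -> a = b.
Proof.
move=> a_ge1 b_ge1 ab; apply/eqP.
by rewrite eq_le -(hacosh_le a_ge1 b_ge1) -(hacosh_le b_ge1 a_ge1) ab lexx.
Qed.

Lemma sgr_hacoshB (a b : R) : 1 <= a -> 1 <= b ->
  Num.sg (hacosh a - hacosh b) = Num.sg (a - b).
Proof. by move=> a_ge1 b_ge1; rewrite (sgrB_mono hacosh_mono). Qed.

(* the addition formula cosh (s + t) = cosh s cosh t + sinh s sinh t, read on hacosh *)
Lemma hacoshD_le (X Y Z : R) : 1 <= X -> 1 <= Y -> 1 <= Z ->
    Z <= X * Y + Num.sqrt (X ^+ 2 - 1) * Num.sqrt (Y ^+ 2 - 1) ->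
  hacosh Z <= hacosh X + hacosh Y.
Proof.
move=> X_ge1 Y_ge1 Z_ge1 Z_le.
set a := Num.sqrt (X ^+ 2 - 1); set b := Num.sqrt (Y ^+ 2 - 1).
have a_ge0 : 0 <= a := sqrtr_ge0 _; have b_ge0 : 0 <= b := sqrtr_ge0 _.
have sqr_ge0 (t : R) : 1 <= t -> 0 <= t ^+ 2 - 1.
  by move=> t_ge1; rewrite subr_ge0 -(expr1n _ 2) ler_sqr ?nnegrE //; lra.
have a2 : a ^+ 2 = X ^+ 2 - 1 by rewrite sqr_sqrtr // sqr_ge0.
have b2 : b ^+ 2 = Y ^+ 2 - 1 by rewrite sqr_sqrtr // sqr_ge0.
set W := X * Y + a * b.
have W_ge1 : 1 <= W by apply: le_trans Z_ge1 Z_le.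
apply: le_trans (_ : hacosh W <= _); first by rewrite hacosh_le.
have W2 : W ^+ 2 - 1 = (X * b + Y * a) ^+ 2.
  have : W ^+ 2 - 1 - (X * b + Y * a) ^+ 2 = (X ^+ 2 - a ^+ 2) * (Y ^+ 2 - b ^+ 2) - 1.
    by rewrite /W; ring.
  by rewrite a2 b2 => h; apply/eqP; rewrite -subr_eq0 h; apply/eqP; ring.
rewrite /hacosh -/W W2 sqrtr_sqr ger0_norm; last by rewrite addr_ge0 // mulr_ge0 //; lra.
have -> : W + (X * b + Y * a) = (X + a) * (Y + b) by rewrite /W; ring.
by rewrite lnM // posrE; lra.
Qed.

Lemma hacosh_expR (e : R) : 0 < e -> hacosh ((expR e + (expR e)^-1) / 2) = e.
Proof.
move=> e_gt0; have z_gt1 : 1 < expR e by rewrite expR_gt1.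
set z := expR e in z_gt1 *.
have zi_lt1 : z^-1 < 1 by rewrite invf_lt1 //; lra.
have z_neq0 : z != 0 by rewrite gt_eqF //; lra.
set c := (z + z^-1) / 2; set s := (z - z^-1) / 2.
have c2 : c ^+ 2 - 1 = s ^+ 2 by rewrite /c /s; field.
rewrite /hacosh c2 sqrtr_sqr ger0_norm; last by rewrite /s; lra.
have -> : c + s = z by rewrite /c /s; field.
by rewrite /z expRK.
Qed.

End Hacosh.

Section LorentzGeometry.
Variables (R : realType) (d : nat).
Local Notation V := 'rV[R]_d.+1.
Local Notation L := (@lorentz R d).
Implicit Types u v w x y z : V.

Lemma lorentz_proj_orth x y : L y y = -1 -> L (x + L x y *: y) y = 0.
Proof. by move=> yy; rewrite lorentzDl lorentzZl yy; ring. Qed.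

Lemma lorentz_proj_dot x y z : L y y = -1 ->
  L (x + L x y *: y) (z + L z y *: y) = L x z + L x y * L z y.
Proof.
by move=> yy; rewrite !lorentzDl !lorentzDr !lorentzZl !lorentzZr yy (lorentzC y z); ring.
Qed.

Lemma lorentz_cauchy_schwarz_orth y a b : L y y = -1 -> L a y = 0 -> L b y = 0 ->
  L a b ^+ 2 <= L a a * L b b.
Proof.
move=> yy ay by0; apply: quadratic_ge0_disc (lorentz_orth_ge0 yy by0).1 _ => t.
have aby : L (a + t *: b) y = 0 by rewrite lorentzDl lorentzZl ay by0; ring.
have := (lorentz_orth_ge0 yy aby).1.
rewrite lorentzDl !lorentzDr !lorentzZl !lorentzZr (lorentzC b a).
by move/le_trans; apply; rewrite le_eqVlt; apply/orP; left; apply/eqP; ring.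
Qed.

Lemma lorentz_hyperboloid_le x y : L x x = -1 -> L y y = -1 ->
  0 < tcoord x -> 0 < tcoord y -> L x y <= -1 /\ (L x y = -1 -> x = y).
Proof.
move=> xx yy tx_gt0 ty_gt0; set c := L x y.
pose w := x + c *: y.
have wy : L w y = 0 by apply: lorentz_proj_orth.
have ww : L w w = c ^+ 2 - 1 by rewrite /w lorentz_proj_dot // xx -/c; ring.
have [ww_ge0 ww0] := lorentz_orth_ge0 yy wy.
have c_lt0 : c < 0.
  move: xx yy; rewrite /c !lorentz_spatialE.
  set Sxx := dotv (spatial x) (spatial x); set Syy := dotv (spatial y) (spatial y).
  set Sxy := dotv (spatial x) (spatial y) => xx yy.
  have cs := cauchy_schwarz (spatial x) (spatial y); rewrite -/Sxx -/Syy -/Sxy in cs.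
  have Sxx_ge0 : 0 <= Sxx := dotvv_ge0 _.
  have Syy_ge0 : 0 <= Syy := dotvv_ge0 _.
  have Sxx_eq : Sxx = tcoord x ^+ 2 - 1 by rewrite expr2; lra.
  have Syy_eq : Syy = tcoord y ^+ 2 - 1 by rewrite expr2; lra.
  rewrite Sxx_eq Syy_eq in cs.
  have txy_gt0 : 0 < tcoord x * tcoord y by apply: mulr_gt0.
  have Sxy2_lt : Sxy ^+ 2 < (tcoord x * tcoord y) ^+ 2.
    apply: le_lt_trans cs _; rewrite exprMn; nra.
  suff : Sxy < tcoord x * tcoord y by lra.
  rewrite ltNge; apply/negP => le_Sxy.
  move: Sxy2_lt; rewrite ltNge ler_sqr ?nnegrE ?le_Sxy //.
    exact: ltW.
  exact: le_trans (ltW txy_gt0) le_Sxy.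
split.
  have : 1 <= c ^+ 2 by move: ww_ge0; rewrite ww; lra.
  by nra.
move=> c1; have : L w w = 0 by rewrite ww c1; ring.
by move=> /ww0; rewrite /w c1 scaleN1r => /eqP; rewrite subr_eq0 => /eqP.
Qed.

Definition flip v : V := v - (2 * tcoord v) *: delta_mx 0 ord0.

Lemma dotv_flip v a : dotv (flip v) a = L v a.
Proof.
rewrite /flip dotvBl dotvZl lorentzE [dotv (delta_mx _ _) a]dotv_tcoord big1.
  by rewrite /tcoord mxE !eqxx mul1r addr0; ring.
by move=> i i_neq0; rewrite mxE (negbTE i_neq0) andbF mul0r.
Qed.

Lemma lorentz_flip v a : L (flip v) a = dotv v a.
Proof.
rewrite lorentzE dotv_flip lorentzE /flip tcoordB tcoordZ /tcoord mxE !eqxx /=.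
by ring.
Qed.

Lemma tcoord_orth_gt x u : L x x = -1 -> L u u = 1 -> L u x = 0 -> 0 < tcoord x ->
  - tcoord x < tcoord u.
Proof.
rewrite !lorentz_spatialE => xx uu ux tx_gt0.
have cs := cauchy_schwarz (spatial u) (spatial x).
have := dotvv_ge0 (spatial x); have := dotvv_ge0 (spatial u).
have Sxx : dotv (spatial x) (spatial x) = tcoord x ^+ 2 - 1 by rewrite expr2; lra.
have Suu : dotv (spatial u) (spatial u) = 1 + tcoord u ^+ 2 by rewrite expr2; lra.
have Sux : dotv (spatial u) (spatial x) = tcoord u * tcoord x by lra.
rewrite Sxx Suu Sux in cs * => ? ?.
have : tcoord u ^+ 2 < tcoord x ^+ 2 by nra.
by nra.
Qed.

End LorentzGeometry.

Section Hyperbolic.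
Variables (R : realType) (d : nat).
Local Notation T := (mpoint R Hyperbolic d).
Local Notation dst := (@geo_dist R Hyperbolic d).
Local Notation L := (@lorentz R d).

Lemma hyper_dstE (x y : T) : dst x y = hacosh (- L (sval x) (sval y)).
Proof. by []. Qed.

Lemma hyper_point (x : T) : L (sval x) (sval x) = -1 /\ 0 < tcoord (sval x).
Proof. exact: (proj2_sig x). Qed.

Lemma hyper_lorentz_le (x y : T) :
  L (sval x) (sval y) <= -1 /\ (L (sval x) (sval y) = -1 -> x = y).
Proof.
have [xx tx_gt0] := hyper_point x; have [yy ty_gt0] := hyper_point y.
have [xy_le xy_eq] := lorentz_hyperboloid_le xx yy tx_gt0 ty_gt0.
by split => // /xy_eq xy; apply: mpoint_inj.
Qed.

Lemma hyper_lorentz_ge1 (x y : T) : 1 <= - L (sval x) (sval y).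
Proof. by have [xy_le _] := hyper_lorentz_le x y; lra. Qed.

Lemma hyper_dst_sym (x y : T) : dst x y = dst y x.
Proof. by rewrite !hyper_dstE lorentzC. Qed.

Lemma hyper_dst_xx (x : T) : dst x x = 0.
Proof. by rewrite hyper_dstE (hyper_point x).1 opprK hacosh1. Qed.

Lemma hyper_dst_tri (x y z : T) : dst x z <= dst x y + dst y z.
Proof.
rewrite !hyper_dstE; have yy := (hyper_point y).1.
have := lorentz_cauchy_schwarz_orth yy (lorentz_proj_orth (sval x) yy)
  (lorentz_proj_orth (sval z) yy).
rewrite !lorentz_proj_dot // (hyper_point x).1 (hyper_point z).1 (lorentzC (sval z)).
set a := L (sval x) (sval y); set b := L (sval y) (sval z); set c := L (sval x) (sval z).
move=> cs; apply: hacoshD_le; rewrite ?hyper_lorentz_ge1 //.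
have a_ge1 : 1 <= - a by exact: hyper_lorentz_ge1.
have b_ge1 : 1 <= - b by exact: hyper_lorentz_ge1.
have sqr_ge0 (t : R) : 1 <= t -> 0 <= t ^+ 2 - 1.
  by move=> t_ge1; rewrite subr_ge0 -(expr1n _ 2) ler_sqr ?nnegrE //; lra.
rewrite -sqrtrM ?sqr_ge0 //.
have : `|- c - - a * - b| <= Num.sqrt (((- a) ^+ 2 - 1) * ((- b) ^+ 2 - 1)).
  rewrite -sqrtr_sqr ler_sqrt ?mulr_ge0 ?sqr_ge0 //.
  have -> : (- c - - a * - b) ^+ 2 = (c + a * b) ^+ 2 by ring.
  by have -> : ((- a) ^+ 2 - 1) * ((- b) ^+ 2 - 1) = (-1 + a * a) * (-1 + b * b) by ring.
by have := ler_norm (- c - - a * - b); lra.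
Qed.

Lemma hyper_tied (x t p : T) : dst x t = dst x p ->
  L (sval x) (sval t) = L (sval x) (sval p).
Proof.
rewrite !hyper_dstE => /hacosh_inj xtp.
by apply: oppr_inj; apply: xtp; exact: hyper_lorentz_ge1.
Qed.

Lemma hyper_step (x : T) u s : L u u = 1 -> L u (sval x) = 0 -> 0 < s ->
  exists y : T, dst x y = s /\ exists2 c, 0 < c &
    forall a, L (sval x) a = 0 -> L (sval y) a = c * L u a.
Proof.
move=> uu u_x s_gt0; have [xx tx_gt0] := hyper_point x.
have tu_gt := tcoord_orth_gt xx uu u_x tx_gt0.
have z_gt1 : 1 < expR s by rewrite expR_gt1.
set z := expR s in z_gt1.
have zi_gt0 : 0 < z^-1 by rewrite invr_gt0; lra.
have zi_lt1 : z^-1 < 1 by rewrite invf_lt1 //; lra.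
pose ch := (z + z^-1) / 2; pose sh := (z - z^-1) / 2.
have sh_gt0 : 0 < sh by rewrite /sh; lra.
have sh_lt_ch : sh < ch by rewrite /sh /ch; lra.
have chsh : ch ^+ 2 - sh ^+ 2 = 1 by rewrite /ch /sh; field; rewrite gt_eqF //; lra.
pose yv := ch *: sval x + sh *: u.
have yy : L yv yv = -1.
  rewrite /yv !lorentzDl !lorentzDr !lorentzZl !lorentzZr xx uu u_x (lorentzC (sval x)) u_x.
  by nra.
have ty_gt0 : 0 < tcoord yv.
  rewrite /yv tcoordD !tcoordZ.
  have : sh * (- tcoord (sval x)) < sh * tcoord u by rewrite ltr_pM2l.
  have : sh * tcoord (sval x) < ch * tcoord (sval x) by rewrite ltr_pM2r.
  by lra.
have y_in : inspace (k := Hyperbolic) yv by split.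
exists (exist _ yv y_in : T); split.
  rewrite hyper_dstE /= /yv lorentzDr !lorentzZr xx (lorentzC _ u) u_x mulr0 addr0.
  by rewrite mulrN1 opprK hacosh_expR.
by exists sh => // a x_a; rewrite /= /yv lorentzDl !lorentzZl x_a mulr0 add0r.
Qed.

Lemma hyper_perturbable : perturbable dst sval.
Proof.
move=> x v e e_gt0; have [xx tx_gt0] := hyper_point x.
pose w := flip v + L (flip v) (sval x) *: sval x.
have w_x : L w (sval x) = 0 by apply: lorentz_proj_orth.
have w_tied (t p : T) : dst x t = dst x p ->
    L w (sval p - sval t) = dotv v (sval p - sval t).
  move=> /hyper_tied xtp; rewrite /w lorentzDl lorentzZl [L (sval x) _]lorentzBr.
  by rewrite xtp subrr mulr0 addr0 lorentz_flip.
have [w0|w_neq0] := eqVneq w 0.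
  exists x; split => [|t p xtp]; first by rewrite hyper_dst_xx.
  by rewrite xtp subrr -w_tied // w0 lorentz0l.
have [ww_ge0 ww0] := lorentz_orth_ge0 xx w_x.
have ww_gt0 : 0 < L w w.
  by rewrite lt_neqAle ww_ge0 andbT; apply/eqP => /esym/ww0; apply/eqP.
have [c c_gt0 [u [uu u_x u_w]]] : exists2 c, 0 < c & exists u,
    [/\ L u u = 1, L u (sval x) = 0 & forall a, L u a = c * L w a].
  exists (Num.sqrt (L w w))^-1; first by rewrite invr_gt0 sqrtr_gt0.
  exists ((Num.sqrt (L w w))^-1 *: w); split.
  - by rewrite lorentzvv_scale exprVn sqr_sqrtr ?mulVf ?gt_eqF // ltW.
  - by rewrite lorentzZl w_x mulr0.
  - by move=> a; rewrite lorentzZl.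
have [|y [xy [c' c'_gt0 y_u]]] := hyper_step uu u_x (s := e / 2); first by lra.
exists y; split; first by rewrite xy; lra.
move=> t p xtp; rewrite !hyper_dstE sgr_hacoshB ?hyper_lorentz_ge1 //.
have -> : - L (sval y) (sval t) - - L (sval y) (sval p) = L (sval y) (sval p - sval t).
  by rewrite lorentzBr; ring.
rewrite y_u; last by rewrite lorentzBr (hyper_tied xtp) subrr.
by rewrite u_w w_tied // mulrA sgrM gtr0_sg ?mul1r // mulr_gt0.
Qed.

Lemma hyper_lorentzB_gt0 (p t : T) : t <> p -> 0 < L (sval p - sval t) (sval p - sval t).
Proof.
move=> tp; have [pt_le pt_eq] := hyper_lorentz_le p t.
have pt_lt : L (sval p) (sval t) < -1.
  by rewrite lt_neqAle pt_le andbT; apply/eqP => /pt_eq pt; apply: tp.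
rewrite lorentzBl !lorentzBr (lorentzC (sval t)) (hyper_point p).1 (hyper_point t).1.
by lra.
Qed.

Lemma hyper_ties_on_quadric : ties_on_quadric dst sval.
Proof.
move=> x p; exists (flip (sval p)), (fun u => L u u / 2); split.
  by move=> c u; rewrite lorentzvv_scale mulrA.
move=> t _ tp; split; first by rewrite divr_gt0 ?hyper_lorentzB_gt0.
rewrite dotv_flip lorentzBl !lorentzBr (lorentzC (sval t)).
by rewrite (hyper_point p).1 (hyper_point t).1; lra.
Qed.

Lemma hyper_bisector (p t : T) : p <> t -> model_hyperplane (bisector dst p t).
Proof.
move=> pt; exists [set z | L (sval p - sval t) z = 0]; split.
  by exists (sval p - sval t); split => //; apply: hyper_lorentzB_gt0 => /esym.
apply/seteqP; split => y; rewrite /bisector /= lorentzBl !(lorentzC _ (sval y)).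
  move=> /hacosh_inj ty; rewrite ty ?subrr //; exact: hyper_lorentz_ge1.
by move/eqP; rewrite subr_eq0 => /eqP->.
Qed.

End Hyperbolic.

Section Models.
Variable R : realType.

Lemma geo_dist_metric k d :
  [/\ forall x y : mpoint R k d, geo_dist x y = geo_dist y x,
      forall x : mpoint R k d, geo_dist x x = 0
    & forall x y z : mpoint R k d, geo_dist x z <= geo_dist x y + geo_dist y z].
Proof.
case: k; split.
- exact: euclid_dst_sym.
- exact: euclid_dst_xx.
- exact: euclid_dst_tri.
- exact: sphere_dst_sym.
- exact: sphere_dst_xx.
- exact: sphere_dst_tri.
- exact: hyper_dst_sym.
- exact: hyper_dst_xx.
- exact: hyper_dst_tri.
Qed.

Lemma geo_dist_ties_breakable k d : ties_breakable (@geo_dist R k d).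
Proof.
case: k; apply: (quadric_ties_breakable (@mpoint_inj R _ d)).
- exact: euclid_perturbable.
- exact: euclid_ties_on_quadric.
- exact: sphere_perturbable.
- exact: sphere_ties_on_quadric.
- exact: hyper_perturbable.
- exact: hyper_ties_on_quadric.
Qed.

Lemma geo_bisector k d (p t : mpoint R k d) :
  p <> t -> model_hyperplane (bisector (@geo_dist R k d) p t).
Proof.
case: k p t => p t.
- exact: euclid_bisector.
- exact: sphere_bisector.
- exact: hyper_bisector.
Qed.

End Models.

Unset Implicit Arguments.

Theorem mainTheorem9 (R : realType) (k : geom) (d : nat)
    (G : set (mpoint R k d -> mpoint R k d)) (x0 : mpoint R k d)
    (hG : isometry_group (@geo_dist R k d) G)
    (hdisc : discontinuous_group (@geo_dist R k d) G)
    (hstab : trivial_stabilizer G x0)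
    (n : nat) (hn : (1 <= n)%N) (hnS : card_le `I_n (gorbit G x0)) :
  let B := brillouin (@geo_dist R k d) (gorbit G x0) n x0 in
  [/\ fundamental_domain (@geo_dist R k d) G B,
      (exists2 HH : set (set (mpoint R k d)),
         (forall H, HH H -> model_hyperplane H) /\ locally_finite (@geo_dist R k d) HH
       & mboundary (@geo_dist R k d) B `<=` \bigcup_(H in HH) H)
    & mboundary (@geo_dist R k d) B
        = mboundary (@geo_dist R k d) (minterior (@geo_dist R k d) B)].
Proof.
have [dst_sym dst_xx dst_tri] := geo_dist_metric R k d.
exact: (brillouin_fundamental_domain dst_sym dst_xx dst_tri hG hdisc
  (@geo_dist_ties_breakable R k d) hstab (@geo_bisector R k d) hn hnS).
Qed.
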